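(* Let $X$ be a connected weighted graph. Then the subdivision $S(X)$ is nonsingular (i.e. $A(S(X))$ is invertible) if and only if $X$ is unicyclic and its unique cycle $C_p$, with the weights it inherits from $X$, has nonsingular subdivision $S(C_p)$.
   Context: Graphs are simple, undirected, with nonzero real edge weights; $A(\cdot)$ is the weighted adjacency matrix. The subdivision $S(X)$ of a weighted graph $X$ is obtained by replacing each edge $\{u,v\}$ of weight $\omega$ by a new vertex $w$ and two edges $\{u,w\},\{w,v\}$, each of weight $\omega$. *)

From HB Require Import structures.
From mathcomp Require Import all_boot all_order all_algebra.
Set Implicit Arguments. Unset Strict Implicit. Unset Printing Implicit Defensive.
Import Order.TTheory GRing.Theory Num.Theory.
Local Open Scope ring_scope.

(* A weighted simple graph on a finite vertex type T is given by a weight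
   function w : T -> T -> R (assumed symmetric, zero on the diagonal);
   {x,y} is an edge, of weight w x y, iff x != y and w x y != 0. *)
Section WGraph.
Variables (R : realFieldType) (T : finType) (w : T -> T -> R).

Definition adj (x y : T) : bool := (x != y) && (w x y != 0).

Definition edges : {set {set T}} :=
  [set e | [exists x, exists y, adj x y && (e == [set x; y])]].

Definition edge_t := {e : {set T} | e \in edges}.

(* Weight of the subdivision edge between vertex v and edge-vertex e:
   the weight of e if v is an endpoint of e, and 0 otherwise. *)
Definition inc (v : T) (e : edge_t) : R :=
  if v \in val e then \sum_(u in val e :\ v) w v u else 0.

Definition S_adj (a b : (T + edge_t)%type) : R :=
  match a, b with
  | inl v, inr e => inc v e
  | inr e, inl v => inc v e
  | _, _ => 0
  end.

Definition connectedw : Prop := forall x y : T, connect adj x y.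

Definition is_cycle (C : {set T}) (F : {set {set T}}) : Prop :=
  [/\ F \subset edges,
      forall e, e \in F -> e \subset C,
      (2 < #|C|)%N,
      forall v, v \in C -> #|[set e in F | v \in e]| = 2%N &
      forall x y, x \in C -> y \in C ->
        connect (fun a b => [set a; b] \in F) x y].

Definition cyc_weight (C : {set T}) (F : {set {set T}})
  (x y : {x : T | x \in C}) : R :=
  if [set val x; val y] \in F then w (val x) (val y) else 0.

End WGraph.

Definition adj_mx (R : realFieldType) (V : finType) (a : V -> V -> R)
  : 'M[R]_#|V| := \matrix_(i, j) a (enum_val i) (enum_val j).

Definition nonsingular (R : realFieldType) (V : finType) (a : V -> V -> R)
  : Prop := adj_mx a \in unitmx.

Arguments adj {R T} w x y.
Arguments edges {R T} w.
Arguments inc {R T} w v e.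
Arguments S_adj {R T} w a b.
Arguments connectedw {R T} w.
Arguments is_cycle {R T} w C F.
Arguments cyc_weight {R T} w C F x y.

(* A(S(X)) is the block matrix [[0, B], [B^T, 0]], where B is the weighted
   vertex-edge incidence matrix of X, so S(X) is nonsingular iff B is square
   with independent rows (equivalently, independent columns).
   Rank counting with the signed incidence matrix shows that a forest has
   |E| < |V| and a connected graph has |V| <= |E| + 1.  Deleting an edge of a
   cycle keeps a graph connected, so a connected graph with |E| = |V| has a
   cycle and no second one, and a connected unicyclic graph has |E| = |V|.
   For a unicyclic X the cycle C transfers the nonsingularity both ways: an
   edge vector killed by the incidence matrix of C, extended by zero, is killed
   by B; and a vertex vector x killed by B that vanishes on C vanishes
   everywhere, since along an edge ab of nonzero weight x_b = - x_a. *)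

From HB Require Import structures.
From mathcomp Require Import all_boot all_order all_algebra.
From mathcomp Require Import zify.
From Stdlib Require Import Classical.
Set Implicit Arguments. Unset Strict Implicit. Unset Printing Implicit Defensive.
Import Order.TTheory GRing.Theory Num.Theory.
Local Open Scope ring_scope.

Section RowsFree.
Variable R : fieldType.
Implicit Types I J : finType.

Definition fun_mx I J (f : I -> J -> R) : 'M[R]_(#|I|, #|J|) :=
  \matrix_(i, j) f (enum_val i) (enum_val j).

Definition rows_free I J (f : I -> J -> R) : Prop :=
  forall x : I -> R, (forall j, \sum_i x i * f i j = 0) -> forall i, x i = 0.

Lemma sum_enum_val I (F : I -> R) : \sum_(k < #|I|) F (enum_val k) = \sum_i F i.
Proof.
by rewrite -(big_enum_val (A := predT)); apply: eq_bigl => i; rewrite inE.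
Qed.

Lemma mul_row_fun_mx I J (f : I -> J -> R) (u : 'rV_#|I|) j :
  (u *m fun_mx f) 0 (enum_rank j) = \sum_i u 0 (enum_rank i) * f i j.
Proof.
rewrite mxE -(sum_enum_val (fun i => u 0 (enum_rank i) * f i j)).
by apply: eq_bigr => k _; rewrite enum_valK !mxE enum_rankK.
Qed.

Lemma rows_freeP I J (f : I -> J -> R) : reflect (rows_free f) (row_free (fun_mx f)).
Proof.
apply: (iffP idP) => [free_f x x_ker i | free_f].
- pose u : 'rV_#|I| := \row_k x (enum_val k).
  have : u *m fun_mx f = 0.
    apply/rowP => k; rewrite -[k]enum_valK mul_row_fun_mx mxE -[RHS](x_ker (enum_val k)).
    by apply: eq_bigr => i' _; rewrite mxE enum_rankK.
  move/eqP; rewrite mulmx_free_eq0 // => /eqP/rowP/(_ (enum_rank i)).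
  by rewrite !mxE enum_rankK.
- apply: inj_row_free => u u_ker; apply/rowP => k; rewrite mxE -[k]enum_valK.
  apply: (free_f (fun i => u 0 (enum_rank i))) => j.
  by rewrite -mul_row_fun_mx u_ker mxE.
Qed.

Lemma rows_free_card I J (f : I -> J -> R) : rows_free f -> (#|I| <= #|J|)%N.
Proof. by move/rows_freeP/eqP <-; exact: rank_leq_col. Qed.

Lemma rows_free_trC I J (f : I -> J -> R) :
  #|I| = #|J| -> rows_free (fun j i => f i j) <-> rows_free f.
Proof.
move=> eqIJ; have trE : fun_mx (fun j i => f i j) = (fun_mx f)^T.
  by apply/matrixP => j i; rewrite !mxE.
have free_tr : row_free (fun_mx (fun j i => f i j)) = row_free (fun_mx f).
  by rewrite trE /row_free mxrank_tr; apply/eqP/eqP => ->.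
by split => /rows_freeP; [rewrite free_tr | rewrite -free_tr] => /rows_freeP.
Qed.

Definition bipartite_fun I J (B : I -> J -> R) (s t : I + J) : R :=
  match s, t with
  | inl i, inr j => B i j
  | inr j, inl i => B i j
  | _, _ => 0
  end.

Lemma sum_bipartite_inl I J (B : I -> J -> R) (z : I + J -> R) i :
  \sum_s z s * bipartite_fun B s (inl i) = \sum_j z (inr j) * B i j.
Proof. by rewrite big_sumType /= [X in X + _]big1 ?add0r // => *; rewrite mulr0. Qed.

Lemma sum_bipartite_inr I J (B : I -> J -> R) (z : I + J -> R) j :
  \sum_s z s * bipartite_fun B s (inr j) = \sum_i z (inl i) * B i j.
Proof. by rewrite big_sumType /= [X in _ + X]big1 ?addr0 // => *; rewrite mulr0. Qed.

Lemma rows_free_bipartite I J (B : I -> J -> R) :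
  rows_free (bipartite_fun B) <-> rows_free B /\ rows_free (fun j i => B i j).
Proof.
split=> [free_B | [free_B free_Bt] z z_ker].
  split=> [x x_ker i | y y_ker j].
    apply: (free_B (fun s => if s is inl i then x i else 0) _ (inl i)) => -[i' | j'].
      by rewrite sum_bipartite_inl big1 // => j _; rewrite mul0r.
    by rewrite sum_bipartite_inr.
  apply: (free_B (fun s => if s is inr j then y j else 0) _ (inr j)) => -[i' | j'].
    by rewrite sum_bipartite_inl.
  by rewrite sum_bipartite_inr big1 // => i _; rewrite mul0r.
have zI i : z (inl i) = 0.
  by apply: (free_B (fun i => z (inl i))) => j; rewrite -sum_bipartite_inr z_ker.
have zJ j : z (inr j) = 0.
  by apply: (free_Bt (fun j => z (inr j))) => i; rewrite -sum_bipartite_inl z_ker.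
by case.
Qed.

Lemma rows_free_bipartite_square I J (B : I -> J -> R) :
  rows_free (bipartite_fun B) <-> #|I| = #|J| /\ rows_free B.
Proof.
rewrite rows_free_bipartite; split=> [[free_B free_Bt] | [eqIJ free_B]].
  by split=> //; apply/eqP; rewrite eqn_leq !(rows_free_card free_B, rows_free_card free_Bt).
by split=> //; apply/rows_free_trC.
Qed.

Lemma rows_free_bipartite_squareT I J (B : I -> J -> R) :
  rows_free (bipartite_fun B) <-> #|I| = #|J| /\ rows_free (fun j i => B i j).
Proof.
rewrite rows_free_bipartite_square; split=> -[eqIJ free]; split=> //; exact/rows_free_trC.
Qed.

End RowsFree.

Lemma nonsingular_S_adj (R : realFieldType) (V : finType) (a : V -> V -> R) :
  nonsingular (S_adj a) <-> rows_free (bipartite_fun (inc a)).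
Proof. by rewrite /nonsingular -row_free_unit; split => /rows_freeP. Qed.

Lemma set2_inj (T : finType) (a b x y : T) :
  [set a; b] = [set x; y] -> (a = x /\ b = y) \/ (a = y /\ b = x).
Proof.
move=> eq_ab_xy.
have a_xy : a \in [set x; y] by rewrite -eq_ab_xy set21.
have b_xy : b \in [set x; y] by rewrite -eq_ab_xy set22.
have x_ab : x \in [set a; b] by rewrite eq_ab_xy set21.
have y_ab : y \in [set a; b] by rewrite eq_ab_xy set22.
by move: a_xy b_xy x_ab y_ab => /set2P[]? /set2P[]? /set2P[]? /set2P[]?; subst; auto.
Qed.

Lemma card_sub_set (T : finType) (A : {set T}) : #|{: {x | x \in A}}| = #|A|.
Proof. by rewrite card_sig; apply: eq_card => x; rewrite !inE. Qed.

Section Edges.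
Variables (R : realFieldType) (T : finType) (w : T -> T -> R).
Hypothesis w_sym : forall x y, w x y = w y x.

Lemma adj_sym : symmetric (adj w).
Proof. by move=> x y; rewrite /adj eq_sym w_sym. Qed.

Lemma edgesP e : reflect (exists x y, adj w x y /\ e = [set x; y]) (e \in edges w).
Proof.
rewrite inE; apply: (iffP existsP) => [[x /existsP[y /andP[xy /eqP ->]]] | [x [y [xy ->]]]].
  by exists x, y.
by exists x; apply/existsP; exists y; rewrite xy eqxx.
Qed.

Lemma set2_edges x y : ([set x; y] \in edges w) = adj w x y.
Proof.
apply/edgesP/idP => [[a [b [ab /set2_inj[[-> ->] | [-> ->]]]]] | xy] //.
  by rewrite adj_sym.
by exists x, y.
Qed.

Lemma card_edge e : e \in edges w -> #|e| = 2%N.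
Proof. by case/edgesP => x [y [/andP[xy _] ->]]; rewrite cards2 xy. Qed.

Lemma set2_edgesP e : e \in edges w -> exists x y, x != y /\ e = [set x; y].
Proof. by move/card_edge/eqP/cards2P. Qed.

Lemma set2_edges_id (H : {set {set T}}) : H \subset edges w -> forall x, [set x; x] \notin H.
Proof. by move=> sHE x; apply/negP => /(subsetP sHE); rewrite set2_edges /adj eqxx. Qed.

End Edges.

Section CycleSearch.
Variables (T : finType) (r : rel T).
Hypothesis r_irr : irreflexive r.
Hypothesis r_deg : forall a b, r a b -> exists2 c, r b c & c != a.

Definition has_cycle_seq := exists q : seq T, [/\ uniq q, cycle r q & (2 < size q)%N].

Lemma extend_path_or_cycle x0 s z :
  path r x0 (rcons s z) -> uniq (x0 :: rcons s z) ->
  has_cycle_seq \/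
  exists c, path r x0 (rcons (rcons s z) c) /\ uniq (x0 :: rcons (rcons s z) c).
Proof.
move=> r_path uniq_p; have /andP[_ ryz] : path r x0 s && r (last x0 s) z by rewrite -rcons_path.
have [c rzc cy] := r_deg ryz.
have cz : c != z by apply: contraTneq rzc => ->; rewrite r_irr.
case: (boolP (c \in x0 :: rcons s z)) => [c_in | c_out]; last first.
  right; exists c; split; first by rewrite rcons_path r_path last_rcons.
  by rewrite -rcons_cons rcons_uniq c_out uniq_p.
left; have [p1 [p2 def_p]] : exists p1 p2, x0 :: rcons s z = p1 ++ c :: p2.
  by case/splitPr: c_in => p1 p2; exists p1, p2.
exists (c :: p2).
have last_p2 : last c p2 = z.
  by have := congr1 (last x0) def_p; rewrite last_cat /= last_rcons.
split.
- by move: uniq_p; rewrite def_p cat_uniq => /and3P[].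
- move: r_path; rewrite -/(sorted r (x0 :: rcons s z)) def_p sorted_cat_cons.
  by rewrite /= rcons_path last_p2 rzc andbT => /andP[].
case: p2 def_p last_p2 => [|t [|u p2]] //= def_p; first by move/eqP; rewrite (negbTE cz).
move=> tz; move: def_p; rewrite tz -rcons_cons.
have -> : p1 ++ [:: c; z] = rcons (rcons p1 c) z by rewrite -!cats1 -catA.
by case/rcons_inj => /(congr1 (last x0)); rewrite last_rcons /= => yc; rewrite yc eqxx in cy.
Qed.

Lemma path_cycle_seq n x0 s z : (#|T| <= n + size s)%N ->
  path r x0 (rcons s z) -> uniq (x0 :: rcons s z) -> has_cycle_seq.
Proof.
elim: n s z => [|n IHn] s z le_T r_path uniq_p.
  have := max_card (mem (x0 :: rcons s z)).
  by rewrite (card_uniqP uniq_p) /= size_rcons ltnNge (leq_trans le_T).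
have [//|[c [c_path uniq_c]]] := extend_path_or_cycle r_path uniq_p.
by apply: (IHn (rcons s z) c) => //; rewrite size_rcons addnS.
Qed.

Lemma edge_cycle_seq a b : r a b -> has_cycle_seq.
Proof.
move=> rab; apply: (@path_cycle_seq #|T| a [::] b); rewrite ?addn0 //= ?rab //.
by rewrite inE andbT; apply: contraTneq rab => ->; rewrite r_irr.
Qed.

End CycleSearch.

Lemma next_next_neq (T : eqType) (q : seq T) v :
  uniq q -> (2 < size q)%N -> v \in q -> next q (next q v) != v.
Proof.
move=> uniq_q size_q /rot_to[i s' rot_q].
have uniq_s' : uniq (v :: s') by rewrite -rot_q rot_uniq.
have size_s' : (2 < size (v :: s'))%N by rewrite -rot_q size_rot.
rewrite -!(next_rot i uniq_q) rot_q.
case: s' uniq_s' size_s' {rot_q} => [|a [|b t]] //= /andP[v_ab _] _.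
have av : (a == v) = false by apply: contraNF v_ab => /eqP <-; rewrite inE eqxx.
rewrite eqxx /= av eqxx.
by apply: contraNneq v_ab => <-; rewrite !inE eqxx /= orbT.
Qed.

Section CycleInEdgeSet.
Variables (R : realFieldType) (T : finType) (w : T -> T -> R).
Hypothesis w_sym : forall x y, w x y = w y x.
Variable H : {set {set T}}.
Hypothesis sHE : H \subset edges w.

Let rH : rel T := fun a b => [set a; b] \in H.

Lemma is_cycle_seq (q : seq T) : uniq q -> cycle rH q -> (2 < size q)%N ->
  is_cycle w [set x in q] [set [set x; next q x] | x in q].
Proof.
move=> uniq_q cycle_q size_q; set F := [set [set x; next q x] | x in q].
have next_H x : x \in q -> [set x; next q x] \in H by exact: next_cycle cycle_q.
split.
- apply/subsetP => _ /imsetP[x x_q ->]; exact: (subsetP sHE _ (next_H x x_q)).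
- move=> _ /imsetP[x x_q ->]; apply/subsetP => v /set2P[] ->; by rewrite inE ?mem_next.
- by rewrite cardsE (card_uniqP uniq_q).
- move=> v; rewrite inE => v_q.
  have [v_next v_prev] : v != next q v /\ next q (next q v) != v.
    split; last exact: next_next_neq.
    by apply: contraTneq (next_H v v_q) => <-; apply: (set2_edges_id w_sym sHE v).
  have -> : [set e in F | v \in e] = [set [set v; next q v]; [set prev q v; v]].
    apply/setP => e; rewrite !inE; apply/andP/orP => [[/imsetP[x x_q ->]] | ].
      by case/set2P => [-> | ->]; [left | right; rewrite (prev_next uniq_q)].
    case=> /eqP ->; split; rewrite ?set21 ?set22 //; first exact: imset_f.
    by rewrite -{2}(next_prev uniq_q v); apply: imset_f; rewrite mem_prev.
  rewrite cards2; case: eqP => // /set2_inj[[_ nv] | [_ nv]].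
    by rewrite nv eqxx in v_next.
  by rewrite nv (next_prev uniq_q) eqxx in v_prev.
- move=> x y; rewrite !inE => x_q y_q; apply: (connect_cycle _ x_q y_q).
  by apply: (cycle_from_next uniq_q) => z z_q; exact: imset_f.
Qed.

Lemma min_degree_cycle : (exists a b, [set a; b] \in H) ->
  (forall a b, [set a; b] \in H -> exists2 c, [set b; c] \in H & c != a) ->
  exists C F, is_cycle w C F /\ F \subset H.
Proof.
move=> [a [b ab_H]] deg_H.
have [q [uniq_q cycle_q size_q]] : has_cycle_seq rH.
  by apply: (edge_cycle_seq _ deg_H ab_H) => x; exact/negbTE/(set2_edges_id w_sym sHE).
exists [set x in q], [set [set x; next q x] | x in q]; split; first exact: is_cycle_seq.
by apply/subsetP => _ /imsetP[x x_q ->]; exact: next_cycle cycle_q x_q.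
Qed.

End CycleInEdgeSet.

Definition sgn_inc (T : finType) (v : T) (e : {set T}) : rat :=
  if v \in e then (if [pick u in e] == Some v then 1 else -1) else 0.

Lemma sgn_inc_eq0 (T : finType) (v : T) e : (sgn_inc v e == 0) = (v \notin e).
Proof.
rewrite /sgn_inc; case: (v \in e); rewrite ?eqxx //.
by case: ifP; rewrite ?oppr_eq0 oner_eq0.
Qed.

Section SignedIncidence.
Variables (T : finType) (E : {set {set T}}).
Hypothesis card_E : forall e, e \in E -> #|e| = 2%N.

Local Notation E_t := {e : {set T} | e \in E}.

Lemma sum_sgn_inc2 (c : T -> rat) x y : x != y ->
  (\sum_v c v * sgn_inc v [set x; y] == 0) = (c x == c y).
Proof.
move=> xy; have yx : y != x by rewrite eq_sym.
rewrite (bigD1 x) // (bigD1 y) //= addrA big1 ?addr0; last first.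
  by move=> v /andP[vy vx]; rewrite /sgn_inc !inE (negbTE vx) (negbTE vy) mulr0.
rewrite /sgn_inc !set21 !set22; case: pickP => [u | ]; last by move/(_ x); rewrite set21.
have Some_eq (a b : T) : (Some a == Some b) = (a == b) by [].
case/set2P => ->; rewrite !Some_eq eqxx ?(negbTE xy) ?(negbTE yx) mulr1 mulrN1.
  by rewrite subr_eq0.
by rewrite addrC subr_eq0 eq_sym.
Qed.

Lemma sgn_inc_ker_eq (x : T -> rat) :
  (forall e : E_t, \sum_v x v * sgn_inc v (val e) = 0) ->
  forall a b, [set a; b] \in E -> x a = x b.
Proof.
move=> x_ker a b ab_E; apply/eqP; rewrite -sum_sgn_inc2; last first.
  by move/card_E: ab_E; rewrite cards2; case: eqP.
by rewrite (x_ker (exist (fun e => e \in E) _ ab_E)).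
Qed.

Lemma connected_card : (forall x y, connect (fun a b => [set a; b] \in E) x y) ->
  (#|T| <= #|E| + 1)%N.
Proof.
move=> E_conn; have [v0 _ | T0] := pickP (fun _ : T => true); last by rewrite (eq_card0 T0).
pose D := fun_mx (fun v (e : E_t) => sgn_inc v (val e)).
have ker_const : (kermx D <= (const_mx 1 : 'rV[rat]_#|T|))%MS.
  apply/row_subP => i; set u := row i (kermx D).
  pose x v := u 0 (enum_rank v).
  have x_ker (e : E_t) : \sum_v x v * sgn_inc v (val e) = 0.
    rewrite -(mul_row_fun_mx (fun v (e : E_t) => sgn_inc v (val e))).
    by rewrite /u -row_mul mulmx_ker row0 mxE.
  have x_const v : x v = x v0.
    have closed_x : closed (fun a b => [set a; b] \in E) [pred u | x u == x v0].
      by move=> a b /(sgn_inc_ker_eq x_ker) xab; rewrite !inE xab.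
    by apply/eqP; have := closed_connect closed_x (E_conn v0 v); rewrite !inE eqxx => <-.
  have -> : u = x v0 *: const_mx 1.
    apply/rowP => k; rewrite [RHS]mxE [X in _ * X]mxE mulr1.
    by rewrite -(x_const (enum_val k)) /x enum_valK.
  by apply: scalemx_sub; exact: submx_refl.
have := leq_trans (mxrankS ker_const) (rank_leq_row _); rewrite mxrank_ker.
have := leq_trans (rank_leq_col D) (eq_leq (card_sub_set E)); lia.
Qed.

Lemma rows_free_sgn_inc_card : (0 < #|T|)%N ->
  rows_free (fun (e : E_t) v => sgn_inc v (val e)) -> (#|E| < #|T|)%N.
Proof.
move=> T_gt0 /rows_freeP /eqP; set D := fun_mx _ => rank_D.
have D1 : D *m (const_mx 1 : 'M[rat]_(#|T|, 1)) = 0.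
  apply/matrixP => i j; rewrite !mxE.
  have /card_E/eqP/cards2P[x [y [xy E_i]]] := valP (enum_val i).
  rewrite (eq_bigr (fun k => 1 * sgn_inc (enum_val k) [set x; y])); last first.
    by move=> k _; rewrite !mxE mulr1 mul1r E_i.
  by rewrite (sum_enum_val (fun v => 1 * sgn_inc v [set x; y])); apply/eqP; rewrite sum_sgn_inc2.
have one_neq0 : (const_mx 1 : 'M[rat]_(#|T|, 1)) != 0.
  by apply/eqP => /matrixP/(_ (Ordinal T_gt0) 0); rewrite !mxE => /eqP; rewrite oner_eq0.
have := mulmx0_rank_max D1; rewrite rank_D (card_sub_set E).
by move: one_neq0; rewrite -mxrank_eq0 -lt0n; lia.
Qed.

End SignedIncidence.

Section AcyclicEdgeSet.
Variables (R : realFieldType) (T : finType) (w : T -> T -> R).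
Hypothesis w_sym : forall x y, w x y = w y x.
Variable E : {set {set T}}.
Hypothesis sEw : E \subset edges w.

Lemma flow_support_cycle (y : {e | e \in E} -> rat) e0 :
  (forall v, \sum_e y e * sgn_inc v (val e) = 0) -> y e0 != 0 ->
  exists C F, is_cycle w C F /\ F \subset E.
Proof.
(* No vertex lies on exactly one edge of the support H of y: its equation in
   y_ker would have exactly one nonzero term. *)
move=> y_ker ye0; pose H := [set val e | e in [set e | y e != 0]].
have sHE : H \subset E by apply/subsetP => _ /imsetP[e _ ->]; exact: valP.
suff [C [F [cyc sFH]]] : exists C F, is_cycle w C F /\ F \subset H.
  by exists C, F; split; last exact: subset_trans sFH sHE.
apply: (min_degree_cycle w_sym (subset_trans sHE sEw)).
  have [a [b [_ e0E]]] := set2_edgesP (subsetP sEw _ (valP e0)).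
  by exists a, b; rewrite -e0E; apply: imset_f; rewrite inE.
move=> a b /imsetP[e1]; rewrite inE => ye1 e1E.
case: (pickP (fun c => ([set b; c] \in H) && (c != a))) => [c /andP[] | no_c]; first by exists c.
have := y_ker b; rewrite (bigD1 e1) //= big1 ?addr0 => [/eqP | e ne1].
  by rewrite mulf_eq0 (negbTE ye1) sgn_inc_eq0 -e1E set22.
case: (y e =P 0) => [-> | /eqP ye]; first by rewrite mul0r.
case: (boolP (b \in val e)) => b_e; last first.
  by move: b_e; rewrite -sgn_inc_eq0 => /eqP ->; rewrite mulr0.
have [p [q [_ eE]]] := set2_edgesP (subsetP sEw _ (valP e)).
have [c ebc] : exists c, val e = [set b; c].
  by move: b_e; rewrite eE => /set2P[] ->; [exists q | exists p; rewrite setUC].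
have eH : val e \in H by apply: imset_f; rewrite inE.
have /negbT := no_c c; rewrite -ebc eH /= negbK => /eqP ca.
by case/eqP: ne1; apply: val_inj; rewrite ebc -e1E ca setUC.
Qed.

Lemma acyclic_card : (0 < #|T|)%N ->
  (forall C F, is_cycle w C F -> ~~ (F \subset E)) -> (#|E| < #|T|)%N.
Proof.
move=> T_gt0 no_cycle; apply: rows_free_sgn_inc_card => //.
  by move=> e /(subsetP sEw); exact: card_edge.
move=> y y_ker e; apply/eqP/negPn/negP => ye.
have [C [F [cyc sFE]]] := flow_support_cycle y_ker ye.
by move: (no_cycle C F cyc); rewrite sFE.
Qed.

End AcyclicEdgeSet.

Lemma double_count (T : finType) (F : {set {set T}}) (A : {set T}) :
  (\sum_(v in A) #|[set e in F | v \in e]| = \sum_(e in F) #|e :&: A|)%N.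
Proof.
have count_mem (I : finType) (B : {set I}) (P : pred I) :
    #|[set i in B | P i]| = (\sum_(i in B) P i)%N.
  rewrite -sum1_card (eq_bigl (fun i => (i \in B) && P i)) => [|i]; last by rewrite inE.
  by rewrite big_mkcondr; apply: eq_bigr => i _; case: (P i).
rewrite (eq_bigr _ (fun v _ => count_mem _ F (fun e => v \in e))) exchange_big.
by apply: eq_bigr => e _; rewrite -count_mem; apply: eq_card => v; rewrite !inE andbC.
Qed.

Lemma handshake_closed (T : finType) (F : {set {set T}}) (K : {set T}) :
  (forall f, f \in F -> #|f| = 2%N) ->
  (forall x y, [set x; y] \in F -> (x \in K) = (y \in K)) ->
  ~~ odd (\sum_(v in K) #|[set f in F | v \in f]|).
Proof.
move=> card_F closed_K; rewrite double_count (big_morph odd oddD (erefl false : odd 0 = false)).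
rewrite big1 // => f f_F; have /eqP/cards2P[x [y [_ fE]]] := card_F f f_F.
have xy_K : (x \in K) = (y \in K) by apply: closed_K; rewrite -fE.
case: (boolP (x \in K)) => x_K.
  rewrite (setIidPl _) ?card_F //; apply/subsetP => v.
  by rewrite fE => /set2P[] ->; rewrite -?xy_K.
suff -> : f :&: K = set0 by rewrite cards0.
apply/setP => v; rewrite !inE fE !inE.
by apply/negbTE/andP => -[/orP[]/eqP -> v_K]; [rewrite v_K in x_K | rewrite xy_K v_K in x_K].
Qed.

Section Cycle.
Variables (R : realFieldType) (T : finType) (w : T -> T -> R).
Variables (C : {set T}) (F : {set {set T}}).
Hypothesis cyc : is_cycle w C F.

Lemma cycle_edges_sub : F \subset edges w.
Proof. by case: cyc. Qed.

Lemma card_cycle_edges : #|F| = #|C|.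
Proof.
case: cyc => sFw sFC _ deg _; have := double_count F C.
rewrite (eq_bigr (fun _ => 2%N)) => [|v v_C]; last by rewrite deg.
rewrite [RHS](eq_bigr (fun _ => 2%N)) => [|e e_F]; last first.
  by rewrite (setIidPl (sFC e e_F)) (card_edge (subsetP sFw e e_F)).
by rewrite !sum_nat_const => /eqP; rewrite eqn_mul2r => /eqP.
Qed.

Lemma cycle_vertices : C = [set v | [exists e in F, v \in e]].
Proof.
case: cyc => _ sFC _ deg _; apply/setP => v; rewrite inE.
apply/idP/exists_inP => [v_C | [e e_F]]; last exact: (subsetP (sFC e e_F)).
have : (0 < #|[set e in F | v \in e]|)%N by rewrite deg.
by case/card_gt0P => e; rewrite inE => /andP[]; exists e.
Qed.

Lemma cycle_edge_exists : exists e, e \in F.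
Proof.
case: cyc => _ _ size_C deg _.
have [v v_C] : exists v, v \in C by apply/card_gt0P; exact: ltnW (ltnW size_C).
have : (0 < #|[set e in F | v \in e]|)%N by rewrite deg.
by case/card_gt0P => e; rewrite inE => /andP[]; exists e.
Qed.

Lemma cycle_edge_connect a b : [set a; b] \in F ->
  connect (fun x y => [set x; y] \in F :\ [set a; b]) a b.
Proof.
move=> ab_F; case: (cyc) => sFw sFC _ deg _.
set F' := F :\ [set a; b]; set r' := fun x y => [set x; y] \in F'.
set K := [set v | connect r' a v].
have card_F' f : f \in F' -> #|f| = 2%N.
  by rewrite inE => /andP[_ /(subsetP sFw)/card_edge].
have closed_K x y : r' x y -> (x \in K) = (y \in K).
  move=> rxy; rewrite !inE; apply/idP/idP => conn; apply: connect_trans conn (connect1 _) => //.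
  by rewrite /r' setUC.
have K_C v : v \in K -> v \in C.
  have closed_C : closed r' C.
    move=> x y; rewrite /r' inE => /andP[_ /sFC/subsetP xy_C].
    by rewrite !xy_C ?set21 ?set22.
  by rewrite inE => /(closed_connect closed_C) <-; apply: (subsetP (sFC _ ab_F)); rewrite set21.
have deg_F' v : v \in K -> (#|[set f in F' | v \in f]| + (v \in [set a; b]) = 2)%N.
  move=> v_K; rewrite -(deg v (K_C v v_K)) [RHS](cardsD1 [set a; b]) addnC.
  have -> : ([set a; b] \in [set e in F | v \in e]) = (v \in [set a; b]) by rewrite inE ab_F.
  by congr (_ + _)%N; apply: eq_card => f; rewrite !inE andbA.
(* Otherwise a is the only vertex of odd degree in its component K. *)
apply/negPn/negP => not_ab; have /negP := handshake_closed card_F' closed_K; apply.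
have a_K : a \in K by rewrite inE connect0.
rewrite (bigD1 a a_K) /= (eq_bigr (fun _ => 2%N)) => [|v /andP[v_K va]].
  have := deg_F' a a_K; rewrite set21 addn1 => -[->].
  by rewrite sum_nat_const oddD oddM andbF.
have vb : v != b by apply: contraNneq not_ab => <-; rewrite -[connect _ _ _]inE.
by have := deg_F' v v_K; rewrite !inE (negbTE va) (negbTE vb) addn0.
Qed.

Lemma connect_setD1_cycle_edge (E : {set {set T}}) e : F \subset E -> e \in F ->
  (forall x y, connect (fun a b => [set a; b] \in E) x y) ->
  forall x y, connect (fun a b => [set a; b] \in E :\ e) x y.
Proof.
move=> sFE e_F E_conn.
have sym_conn : connect_sym (fun a b => [set a; b] \in E :\ e).
  by apply: sym_connect_sym => a b; rewrite setUC.
have [a [b [_ eE]]] := set2_edgesP (subsetP cycle_edges_sub e e_F).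
have conn_ab : connect (fun a b => [set a; b] \in E :\ e) a b.
  move: e_F; rewrite eE => /cycle_edge_connect; apply: connect_sub => x y.
  by rewrite !inE => /andP[xy_e xy_F]; rewrite connect1 // !inE xy_e (subsetP sFE).
move=> x y; apply: connect_sub (E_conn x y) => u v uv_E.
case: (eqVneq [set u; v] e) => [uv_e | uv_e]; last by rewrite connect1 // !inE uv_e.
by case: (set2_inj (etrans uv_e eE)) => -[-> ->]; rewrite // sym_conn.
Qed.

End Cycle.

Lemma inc_set2 (R : realFieldType) (V : finType) (a : V -> V -> R) (e : edge_t a) p q :
  val e = [set p; q] -> p != q ->
  forall v, inc a v e = if v == p then a p q else if v == q then a q p else 0.
Proof.
move=> eE pq v; rewrite /inc eE !inE.
case: (v =P p) => [-> | /eqP vp] /=; first by rewrite setU1K ?big_set1 // inE.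
case: (v =P q) => [-> | /eqP vq] //=.
by rewrite setUC setU1K ?big_set1 // inE eq_sym.
Qed.

Lemma sum_inc_set2 (R : realFieldType) (V : finType) (a : V -> V -> R) (e : edge_t a) p q
  (x : V -> R) : val e = [set p; q] -> p != q ->
  \sum_v x v * inc a v e = x p * a p q + x q * a q p.
Proof.
move=> eE pq; have qp : q != p by rewrite eq_sym.
rewrite (bigD1 p) // (bigD1 q) //= addrA big1 ?addr0.
  by rewrite !(inc_set2 eE pq) eqxx eq_sym (negbTE pq) eqxx.
by move=> v /andP[vq vp]; rewrite (inc_set2 eE pq) (negbTE vp) (negbTE vq) mulr0.
Qed.

Section ConnectedGraph.
Variables (R : realFieldType) (T : finType) (w : T -> T -> R).
Hypothesis w_sym : forall x y, w x y = w y x.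
Hypothesis X_conn : connectedw w.

Lemma connect_edges x y : connect (fun a b => [set a; b] \in edges w) x y.
Proof. by rewrite (eq_connect (e' := adj w)) ?X_conn // => a b; exact: set2_edges. Qed.

Lemma two_cycles_card C1 F1 C2 F2 e : is_cycle w C1 F1 -> is_cycle w C2 F2 ->
  e \in F1 -> e \notin F2 -> (#|T| < #|edges w|)%N.
Proof.
move=> cyc1 cyc2 e_F1 e_F2.
have sF1 := cycle_edges_sub cyc1; have sF2 := cycle_edges_sub cyc2.
have sF2E1 : F2 \subset edges w :\ e.
  apply/subsetP => f f_F2; rewrite in_setD1 (subsetP sF2 _ f_F2) andbT.
  by apply: contraNneq e_F2 => <-.
have [e2 e2_F2] := cycle_edge_exists cyc2.
have conn1 := connect_setD1_cycle_edge cyc1 sF1 e_F1 connect_edges.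
have conn2 := connect_setD1_cycle_edge cyc2 sF2E1 e2_F2 conn1.
have card_E2 f : f \in edges w :\ e :\ e2 -> #|f| = 2%N.
  by rewrite !in_setD1 => /and3P[_ _ /card_edge].
have := connected_card card_E2 conn2.
have := cardsD1 e (edges w); have := cardsD1 e2 (edges w :\ e).
rewrite (subsetP sF1 _ e_F1) (subsetP sF2E1 _ e2_F2); lia.
Qed.

Lemma cycle_unique_of_card C F : (#|edges w| <= #|T|)%N -> is_cycle w C F ->
  forall C' F', is_cycle w C' F' -> C' = C /\ F' = F.
Proof.
move=> le_E cyc C' F' cyc'.
have eqF : F' = F.
  apply/eqP; rewrite eqEsubset; apply/andP; split; apply/subsetP => e e_F.
    by apply/negPn/negP => /(two_cycles_card cyc' cyc e_F); rewrite ltnNge le_E.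
  by apply/negPn/negP => /(two_cycles_card cyc cyc' e_F); rewrite ltnNge le_E.
by split=> //; rewrite (cycle_vertices cyc') (cycle_vertices cyc) eqF.
Qed.

Lemma cycle_of_card : (0 < #|T|)%N -> (#|T| <= #|edges w|)%N -> exists C F, is_cycle w C F.
Proof.
move=> T_gt0 le_T; apply: NNPP => no_cycle.
suff : (#|edges w| < #|T|)%N by rewrite ltnNge le_T.
apply: (acyclic_card w_sym (subxx _) T_gt0) => C F cyc.
by case: no_cycle; exists C, F.
Qed.

Lemma card_edges_unicyclic C F : (0 < #|T|)%N -> is_cycle w C F ->
  (forall C' F', is_cycle w C' F' -> C' = C /\ F' = F) -> (#|edges w| <= #|T|)%N.
Proof.
move=> T_gt0 cyc cyc_uniq; have [e e_F] := cycle_edge_exists cyc.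
have : (#|edges w :\ e| < #|T|)%N.
  apply: (acyclic_card w_sym (subD1set _ _) T_gt0) => C' F' /cyc_uniq[_ ->].
  by apply/negP => /subsetP/(_ e e_F); rewrite !inE eqxx.
by rewrite [#|edges w|](cardsD1 e) (subsetP (cycle_edges_sub cyc) _ e_F).
Qed.

Lemma inc_ker_connected (x : T -> R) :
  (forall e : edge_t w, \sum_v x v * inc w v e = 0) ->
  forall v0, x v0 = 0 -> forall v, x v = 0.
Proof.
move=> x_ker v0 xv0 v; apply/eqP.
have closed_x : closed (adj w) [pred u | x u == 0].
  move=> a b ab; have ab_E : [set a; b] \in edges w by rewrite set2_edges.
  pose e : edge_t w := exist (fun e => e \in edges w) _ ab_E.
  case/andP: ab => ab wab; have := x_ker e.
  rewrite (sum_inc_set2 x (erefl : val e = [set a; b]) ab) (w_sym b a) -mulrDl => /eqP.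
  by rewrite mulf_eq0 (negbTE wab) orbF addr_eq0 => /eqP xab; rewrite !inE xab oppr_eq0.
by have := closed_connect closed_x (X_conn v0 v); rewrite !inE xv0 eqxx => <-.
Qed.

End ConnectedGraph.

Section CycleSubgraph.
Variables (R : realFieldType) (T : finType) (w : T -> T -> R).
Hypothesis w_sym : forall x y, w x y = w y x.
Variables (C : {set T}) (F : {set {set T}}).
Hypothesis cyc : is_cycle w C F.

Local Notation U := {x : T | x \in C}.
Local Notation wc := (cyc_weight w C F).

Lemma adj_cycle (x y : U) : adj wc x y = ([set val x; val y] \in F).
Proof.
rewrite /adj /cyc_weight; case: ifP => [xy_F | _]; last by rewrite eqxx andbF.
by have := subsetP (cycle_edges_sub cyc) _ xy_F; rewrite set2_edges.
Qed.

Lemma cyc_weight_sym (x y : U) : wc x y = wc y x.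
Proof. by rewrite /cyc_weight setUC w_sym. Qed.

Lemma val_edges_cycle e : e \in edges wc -> val @: e \in F.
Proof. by case/edgesP => x [y [xy ->]]; rewrite imsetU1 imset_set1 -adj_cycle. Qed.

Definition cycle_edge (e : edge_t wc) : edge_t w :=
  exist (fun e => e \in edges w) _ (subsetP (cycle_edges_sub cyc) _ (val_edges_cycle (valP e))).

Lemma cycle_edge_inj : injective cycle_edge.
Proof. by move=> e1 e2 /(congr1 val)/(imset_inj val_inj)/val_inj. Qed.

Lemma inc_cycle_edge (x : U) (e : edge_t wc) : inc wc x e = inc w (val x) (cycle_edge e).
Proof.
case/edgesP: (valP e) => p [q [/andP[pq _] eE]].
have vpq : val p != val q := pq.
have ceE : val (cycle_edge e) = [set val p; val q] by rewrite /= eE imsetU1 imset_set1.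
have pq_F : [set val p; val q] \in F by rewrite -ceE; exact: val_edges_cycle (valP e).
rewrite (inc_set2 eE pq) (inc_set2 ceE vpq) /cyc_weight pq_F setUC pq_F.
by rewrite !(inj_eq val_inj).
Qed.

Lemma inc_cycle_edge_out (v : T) (e : edge_t wc) : v \notin C -> inc w v (cycle_edge e) = 0.
Proof.
move=> v_C; rewrite /inc ifF //; apply/negbTE; apply: contra v_C => /imsetP[u _ ->].
exact: valP.
Qed.

Lemma card_cycle_graph : #|{: U}| = #|{: edge_t wc}|.
Proof.
rewrite !card_sub_set -(card_cycle_edges cyc) -(card_imset _ (imset_inj val_inj)).
apply: eq_card => f; apply/idP/imsetP => [f_F | [e e_E ->]]; last exact: val_edges_cycle.
have [p [q [_ fE]]] := set2_edgesP (subsetP (cycle_edges_sub cyc) _ f_F).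
have [p_C q_C] : p \in C /\ q \in C.
  by case: cyc => _ sFC _ _ _; rewrite !(subsetP (sFC _ f_F)) // fE ?set21 ?set22.
exists [set exist _ p p_C; exist _ q q_C]; last by rewrite imsetU1 imset_set1.
by rewrite (set2_edges cyc_weight_sym) adj_cycle -fE.
Qed.

Lemma rows_free_cycle_edges :
  rows_free (fun e v => inc w v e) -> rows_free (fun (e : edge_t wc) x => inc wc x e).
Proof.
move=> free_E y y_ker.
(* z is y extended by zero outside the edges of the cycle. *)
pose z (f : edge_t w) := \sum_(e | cycle_edge e == f) y e.
have z_ker v : \sum_f z f * inc w v f = 0.
  have -> : \sum_f z f * inc w v f = \sum_e y e * inc w v (cycle_edge e).
    under eq_bigr do rewrite big_distrl /=.
    rewrite (exchange_big_dep predT) //=; apply: eq_bigr => e _.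
    by rewrite (big_pred1 (cycle_edge e)) // => f; exact: eq_sym.
  case: (boolP (v \in C)) => v_C.
    by rewrite -[RHS](y_ker (exist _ v v_C)); apply: eq_bigr => e _; rewrite inc_cycle_edge.
  by rewrite big1 // => e _; rewrite inc_cycle_edge_out ?mulr0.
move=> e; have := free_E z z_ker (cycle_edge e); rewrite /z (big_pred1 e) //.
by move=> e'; rewrite /= (inj_eq cycle_edge_inj).
Qed.

Lemma rows_free_cycle_vertices : rows_free (inc wc) -> forall x : T -> R,
  (forall e : edge_t w, \sum_v x v * inc w v e = 0) -> forall v, v \in C -> x v = 0.
Proof.
move=> free_C x x_ker v v_C.
apply: (free_C (fun u : U => x (val u)) _ (exist _ v v_C)) => e.
rewrite -[RHS](x_ker (cycle_edge e)).
under eq_bigr do rewrite inc_cycle_edge.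
rewrite -(big_sub C (fun u => x u * inc w u (cycle_edge e))).
rewrite [RHS](bigID (mem C)) /= [X in _ = _ + X]big1 ?addr0 // => u u_C.
by rewrite inc_cycle_edge_out ?mulr0.
Qed.

End CycleSubgraph.

Lemma rows_free_inc_of_cycle (R : realFieldType) (T : finType) (w : T -> T -> R)
    (w_sym : forall x y, w x y = w y x) (X_conn : connectedw w) C F :
  is_cycle w C F -> rows_free (inc (cyc_weight w C F)) -> rows_free (inc w).
Proof.
move=> cyc free_C x x_ker.
have [v0 v0_C] : exists v0, v0 \in C by case: cyc => _ _ /ltnW/ltnW/card_gt0P.
have := rows_free_cycle_vertices w_sym cyc free_C x_ker v0_C.
exact: (inc_ker_connected w_sym X_conn x_ker).
Qed.

Unset Implicit Arguments.

Theorem theorem34 (R : realFieldType) (T : finType) (w : T -> T -> R)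
  (w_sym : forall x y, w x y = w y x) (w_diag : forall x, w x x = 0)
  (T_ne : (0 < #|T|)%N) (X_conn : connectedw w) :
  nonsingular (S_adj w) <->
  exists (C : {set T}) (F : {set {set T}}),
    [/\ is_cycle w C F,
        (forall C' F', is_cycle w C' F' -> C' = C /\ F' = F) &
        nonsingular (S_adj (cyc_weight w C F))].
Proof.
rewrite nonsingular_S_adj; split.
- case/rows_free_bipartite_squareT; rewrite card_sub_set => card_E free_E.
  have [C [F cyc]] := cycle_of_card w_sym T_ne (eq_leq card_E).
  have cyc_uniq := cycle_unique_of_card w_sym X_conn (eq_leq (esym card_E)) cyc.
  exists C, F; split=> //; apply/nonsingular_S_adj/rows_free_bipartite_squareT.
  by split; [exact: card_cycle_graph | exact: rows_free_cycle_edges].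
- case=> C [F [cyc cyc_uniq /nonsingular_S_adj/rows_free_bipartite_square[_ free_C]]].
  have free_V := rows_free_inc_of_cycle w_sym X_conn cyc free_C.
  apply/rows_free_bipartite_square; split=> //; rewrite card_sub_set.
  apply/eqP; rewrite eqn_leq (card_edges_unicyclic w_sym T_ne cyc cyc_uniq).
  by rewrite andbT -(card_sub_set (edges w)) (rows_free_card free_V).
Qed.
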